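(* Let $K$ be an algebraically closed valued field and $L$ a valued field extension of $K$ of transcendence degree $1$. Let $c,d\in L\setminus K$. Then $E(c/K)=E(d/K)$.
   Context: For $c\in L$, $T(c/K)=\{\mathrm{val}(c-b): b\in K\}$, and $E(c/K)=\{e\in\mathrm{val}(K): e+T(c/K)=T(c/K)\}$ is the stabilizer of $T(c/K)$ in the value group of $K$. *)

From HB Require Import structures.
From mathcomp Require Import all_boot all_order all_algebra.
Set Implicit Arguments. Unset Strict Implicit. Unset Printing Implicit Defensive.
Import GRing.Theory.
Local Open Scope ring_scope.

Record ordered_abgroup (G : zmodType) := OrderedAbGroup {
  og_le : G -> G -> Prop;
  og_refl : forall x, og_le x x;
  og_antisym : forall x y, og_le x y -> og_le y x -> x = y;
  og_trans : forall x y z, og_le x y -> og_le y z -> og_le x z;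
  og_total : forall x y, og_le x y \/ og_le y x;
  og_addl : forall x y z, og_le x y -> og_le (z + x) (z + y)
}.

(* G u {oo}, with None = oo. *)
Definition ole (G : zmodType) (O : ordered_abgroup G) (a b : option G) : Prop :=
  match a, b with
  | _, None => True
  | None, Some _ => False
  | Some x, Some y => og_le O x y
  end.

Definition oadd (G : zmodType) (a b : option G) : option G :=
  match a, b with
  | Some x, Some y => Some (x + y)
  | _, _ => None
  end.

Definition is_valuation (F : fieldType) (G : zmodType) (O : ordered_abgroup G)
    (v : F -> option G) : Prop :=
  [/\ forall x, v x = None <-> x = 0,
      forall x y, v (x * y) = oadd (v x) (v y)
    & forall x y, ole O (v x) (v (x + y)) \/ ole O (v y) (v (x + y))].

Definition transcendental_over (K L : fieldType) (iota : {rmorphism K -> L}) (t : L) :=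
  forall p : {poly K}, p != 0 -> (map_poly iota p).[t] != 0.

(* x in L is algebraic over K(t): some nonzero polynomial in Y with coefficients
   in K[t] (denominators cleared) vanishes at x. *)
Definition algebraic_over_Kt (K L : fieldType) (iota : {rmorphism K -> L}) (t x : L) :=
  exists P : {poly {poly K}}, P != 0 /\
    (map_poly (fun q : {poly K} => (map_poly iota q).[t]) P).[x] = 0.

(* L has transcendence degree 1 over K: {t} is a transcendence basis for some t. *)
Definition trdeg1 (K L : fieldType) (iota : {rmorphism K -> L}) :=
  exists t : L, transcendental_over iota t /\ forall x : L, algebraic_over_Kt iota t x.

Definition Tset (K L : fieldType) (iota : {rmorphism K -> L}) (G : zmodType)
    (v : L -> option G) (c : L) (g : option G) : Prop :=
  exists b : K, g = v (c - iota b).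

Definition Eset (K L : fieldType) (iota : {rmorphism K -> L}) (G : zmodType)
    (v : L -> option G) (c : L) (e : G) : Prop :=
  (exists a : K, a != 0 /\ v (iota a) = Some e) /\
  (forall g : option G, Tset iota v c g <-> exists h, Tset iota v c h /\ g = oadd (Some e) h).

(* For e > 0 in the value group of K, e lies in E(x/K) exactly when every
   approximation b in K of x can be improved by e: some b' in K has
   v(x - b') >= v(x - b) + e; and E(x/K) is symmetric under negation.
   Improvability passes from t outside K to every y outside K with Q(t, y) = 0
   for some nonzero Q in K[X][Y]. Shifting y, it suffices to improve the
   approximation 0 of y. If that fails, then, K being algebraically closed, a
   nonzero h in K[Y] of degree d satisfies v(h(y)) <= lam + d e for some lam
   below every v(h_j) + j v(y). Now take b in K much closer to t than all roots
   of the coefficients Q_j: then h = Q(b, Y) has coefficients approximating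
   the Q_j(t) to relative precision N e, N = size Q > d, and since
   h(y) = h(y) - Q(t, y) this forces v(h(y)) >= lam + N e.
   With transcendence degree 1, c and d are algebraic over K(t) for a
   transcendental t, which is in turn algebraic over K(c); so improvability
   passes from c to t and from t to d. *)

From mathcomp Require Import all_boot all_order all_algebra polyXY.
From mathcomp Require Import ring.
From Stdlib Require Import Classical.
Set Implicit Arguments. Unset Strict Implicit. Unset Printing Implicit Defensive.
Import GRing.Theory.
Local Open Scope ring_scope.

Notation "x <=[ O ] y" := (og_le O x y) (at level 70, format "x  <=[ O ]  y").

Definition og_lt (G : zmodType) (O : ordered_abgroup G) (x y : G) :=
  x <=[O] y /\ x <> y.

Section OrderedGroup.
Variables (G : zmodType) (O : ordered_abgroup G).

Lemma og_addr x y z : x <=[O] y -> x + z <=[O] y + z.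
Proof. by move=> h; rewrite ![_ + z]addrC; apply: og_addl. Qed.

Lemma og_addr_cancel x y z : x + z <=[O] y + z -> x <=[O] y.
Proof. by move=> /(og_addr (- z)); rewrite !addrK. Qed.

Lemma og_leD a b c d : a <=[O] b -> c <=[O] d -> a + c <=[O] b + d.
Proof. by move=> h1 h2; apply: og_trans (og_addr c h1) (og_addl b h2). Qed.

Lemma og_le_addr x p : 0 <=[O] p -> x <=[O] x + p.
Proof. by move/(og_addl x); rewrite addr0. Qed.

Lemma og_lt_addr x e : og_lt O 0 e -> og_lt O x (x + e).
Proof.
move=> [he ne]; split; first exact: og_le_addr.
by move=> E; apply: ne; apply: (addrI x); rewrite addr0.
Qed.

Lemma og_mulrn_ge0 e n : 0 <=[O] e -> 0 <=[O] e *+ n.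
Proof.
move=> he; elim: n => [|n IH]; first exact: og_refl.
by rewrite mulrS -[0](addr0 0); apply: og_leD.
Qed.

Lemma og_mulrn_lt e n k : og_lt O 0 e -> (n < k)%N -> ~ e *+ k <=[O] e *+ n.
Proof.
move=> [he ne] nk h; rewrite -(subnKC nk) addSnnS mulrnDr in h.
have h0 : e *+ (k - n.+1).+1 <=[O] 0.
  by apply: (og_addr_cancel (z := e *+ n)); rewrite add0r addrC.
apply: ne; apply: (og_antisym he (og_trans _ h0)).
by rewrite mulrS; apply/og_le_addr/og_mulrn_ge0.
Qed.

Lemma og_mulrn_gt0 e n : og_lt O 0 e -> (0 < n)%N -> og_lt O 0 (e *+ n).
Proof.
move=> he n0; split; first exact: og_mulrn_ge0 he.1.
by move=> en; apply: (og_mulrn_lt he n0); rewrite -en; apply: og_refl.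
Qed.

Lemma og_double_eq0 (g : G) : g + g = 0 -> g = 0.
Proof.
move=> h; case: (og_total O 0 g) => hg.
  by apply: (og_antisym _ hg); have := og_le_addr g hg; rewrite h.
by apply: (og_antisym hg); have := og_addl g hg; rewrite h addr0.
Qed.

End OrderedGroup.

Section Valuation.
Variables (L : fieldType) (G : zmodType) (O : ordered_abgroup G) (v : L -> option G).
Hypothesis hv : is_valuation O v.

(* Junk value 0 at x = 0, where v is None. *)
Definition valG (x : L) : G := odflt 0 (v x).
Definition val_ge (x : L) (g : G) : Prop := ole O (Some g) (v x).

Lemma v_eq0 x : v x = None <-> x = 0. Proof. by case: hv. Qed.

Lemma vM x y : v (x * y) = oadd (v x) (v y). Proof. by case: hv. Qed.

Lemma v_Some x : x != 0 -> v x = Some (valG x).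
Proof. by rewrite /valG; case E: (v x) => [g|] //; move/v_eq0: E => ->; rewrite eqxx. Qed.

Lemma valGM x y : x != 0 -> y != 0 -> valG (x * y) = valG x + valG y.
Proof. by move=> hx hy; rewrite {1}/valG vM (v_Some hx) (v_Some hy). Qed.

Lemma valG1 : valG 1 = 0.
Proof.
by apply: (addrI (valG 1)); rewrite addr0 -valGM ?oner_neq0 // mulr1.
Qed.

Lemma valGN x : valG (- x) = valG x.
Proof.
have n1 : (-1 : L) != 0 by rewrite oppr_eq0 oner_neq0.
have vN1 : valG (-1) = 0.
  by apply: (og_double_eq0 O); rewrite -valGM // mulrNN mulr1 valG1.
have [->|nz] := eqVneq x 0; first by rewrite oppr0.
by rewrite -mulN1r valGM // vN1 add0r.
Qed.

Lemma valGV x : x != 0 -> valG x^-1 = - valG x.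
Proof.
move=> nz; apply: (addIr (valG x)).
by rewrite -valGM ?invr_eq0 // mulVf // valG1 addNr.
Qed.

Lemma valGX x n : x != 0 -> valG (x ^+ n) = valG x *+ n.
Proof.
move=> nz; elim: n => [|n IH]; first by rewrite expr0 valG1.
by rewrite exprS valGM ?expf_neq0 // IH mulrS.
Qed.

Lemma valG_prod (I : Type) (s : seq I) (F : I -> L) : (forall i, F i != 0) ->
  \prod_(i <- s) F i != 0 /\ valG (\prod_(i <- s) F i) = \sum_(i <- s) valG (F i).
Proof.
move=> hF; elim: s => [|a s [IH1 IH2]]; first by rewrite !big_nil oner_neq0 valG1.
by rewrite !big_cons mulf_neq0 // valGM // IH2.
Qed.

Lemma val_ge_zero g : val_ge 0 g.
Proof. by rewrite /val_ge (proj2 (v_eq0 0) erefl). Qed.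

Lemma val_geE x g : x != 0 -> val_ge x g <-> g <=[O] valG x.
Proof. by move=> nz; rewrite /val_ge (v_Some nz). Qed.

Lemma val_ge_valG x : val_ge x (valG x).
Proof.
have [->|nz] := eqVneq x 0; first exact: val_ge_zero.
by rewrite val_geE //; apply: og_refl.
Qed.

Lemma val_ge_le x g g' : g <=[O] g' -> val_ge x g' -> val_ge x g.
Proof.
have [->|nz] := eqVneq x 0; first by move=> *; apply: val_ge_zero.
by rewrite !val_geE // => h1 h2; apply: og_trans h1 h2.
Qed.

Lemma valGD_ge x y : x != 0 -> y != 0 -> x + y != 0 ->
  valG x <=[O] valG (x + y) \/ valG y <=[O] valG (x + y).
Proof.
move=> hx hy hxy; case: hv => _ _ /(_ x y).
by rewrite /ole (v_Some hx) (v_Some hy) (v_Some hxy).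
Qed.

Lemma val_geD x y g : val_ge x g -> val_ge y g -> val_ge (x + y) g.
Proof.
have [->|hx] := eqVneq x 0; first by rewrite add0r.
have [->|hy] := eqVneq y 0; first by rewrite addr0.
have [->|hxy] := eqVneq (x + y) 0; first by move=> *; apply: val_ge_zero.
rewrite !val_geE // => h1 h2.
by case: (valGD_ge hx hy hxy) => h; [apply: og_trans h1 h | apply: og_trans h2 h].
Qed.

Lemma val_geN x g : val_ge x g -> val_ge (- x) g.
Proof.
have [->|hx] := eqVneq x 0; first by rewrite oppr0.
by rewrite !val_geE ?oppr_eq0 // valGN.
Qed.

Lemma val_geB x y g : val_ge x g -> val_ge y g -> val_ge (x - y) g.
Proof. by move=> hx /val_geN; apply: val_geD. Qed.

Lemma val_geM x y g h : val_ge x g -> val_ge y h -> val_ge (x * y) (g + h).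
Proof.
have [->|hx] := eqVneq x 0; first by rewrite mul0r => *; apply: val_ge_zero.
have [->|hy] := eqVneq y 0; first by rewrite mulr0 => *; apply: val_ge_zero.
by rewrite !val_geE ?mulf_neq0 // valGM //; apply: og_leD.
Qed.

Lemma val_ge_sum (I : Type) (r : seq I) (P : pred I) (F : I -> L) g :
  (forall i, P i -> val_ge (F i) g) -> val_ge (\sum_(i <- r | P i) F i) g.
Proof.
move=> hF; elim/big_rec: _ => [|i x Pi hx]; first exact: val_ge_zero.
exact: val_geD (hF i Pi) hx.
Qed.

Lemma val_ge_prod (I : eqType) (s : seq I) (F : I -> L) (g : I -> G) :
  (forall i, i \in s -> val_ge (F i) (g i)) ->
  val_ge (\prod_(i <- s) F i) (\sum_(i <- s) g i).
Proof.
elim: s => [|a s IH] hF; first by rewrite !big_nil -valG1; apply: val_ge_valG.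
rewrite !big_cons; apply: val_geM; first by apply: hF; rewrite mem_head.
by apply: IH => i hi; apply: hF; rewrite inE hi orbT.
Qed.

Lemma valGD_lt x y g : x != 0 -> val_ge y g -> og_lt O (valG x) g ->
  x + y != 0 /\ valG (x + y) = valG x.
Proof.
move=> hx hy [hxg nxg].
have [->|ynz] := eqVneq y 0; first by rewrite addr0.
move/(val_geE g ynz): hy => hy.
have hxy : x + y != 0.
  apply: contra_notN nxg => /eqP xy; rewrite -(addr0_eq xy) valGN in hy.
  exact: og_antisym hxg hy.
split=> //; apply: (@og_antisym _ O).
  have := valGD_ge hxy (y := - y); rewrite addrK oppr_eq0 valGN => /(_ ynz hx).
  by case=> // h; case: nxg; exact: (og_antisym hxg (og_trans hy h)).
by case: (valGD_ge hx ynz hxy) => // h; exact: (og_trans hxg (og_trans hy h)).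
Qed.

Lemma valG_close a a' m : a != 0 -> val_ge (a - a') (valG a + m) -> og_lt O 0 m ->
  a' != 0 /\ valG a' = valG a.
Proof.
move=> ha hl hm; have -> : a' = a + - (a - a') by rewrite opprB addrC subrK.
exact: valGD_lt ha (val_geN hl) (og_lt_addr _ hm).
Qed.

End Valuation.

Lemma size_map_poly_le (aR rR : nzSemiRingType) (f : aR -> rR) (p : {poly aR}) :
  (size (map_poly f p) <= size p)%N.
Proof. by rewrite map_polyE; apply: leq_trans (size_Poly _) _; rewrite size_map. Qed.

Section Approximation.
Variables (K : fieldType) (L : fieldType) (iota : {rmorphism K -> L}).
Variables (G : zmodType) (O : ordered_abgroup G) (v : L -> option G).
Hypothesis hv : is_valuation O v.
Local Notation valG := (valG v).
Local Notation val_ge := (val_ge O v).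

Definition outside_K (x : L) := forall b : K, x != iota b.

Definition improvable (x : L) (e : G) :=
  forall b : K, exists b' : K, val_ge (x - iota b') (valG (x - iota b) + e).

Definition hornerK (z : L) (q : {poly K}) : L := (map_poly iota q).[z].

Lemma outside_K_subr (x : L) (b : K) : outside_K x -> x - iota b != 0.
Proof. by move=> hx; rewrite subr_eq0. Qed.

Lemma outside_K_shift (x : L) (b : K) : outside_K x -> outside_K (x - iota b).
Proof. by move=> hx r; rewrite subr_eq addrC -rmorphD. Qed.

Lemma transcendental_outside_K (t : L) : transcendental_over iota t -> outside_K t.
Proof.
move=> ht b; have := ht ('X - b%:P) (negbT (polyXsubC_eq0 b)).
by rewrite map_polyXsubC hornerXsubC subr_eq0.
Qed.

Lemma hornerK_swapXY (t x : L) (P : {poly {poly K}}) :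
  (map_poly (hornerK x) (swapXY P)).[t] = (map_poly (hornerK t) P).[x].
Proof.
have hK z : map_poly (hornerK z) =1 map_poly (horner_eval z \o map_poly iota).
  by apply: eq_map_poly.
rewrite !hK !map_poly_comp -swapXY_map.
by rewrite -horner_polyC -horner_swapXY horner2_swapXY.
Qed.

Section NonImprovable.
Variables (e : G) (y : L).
Hypotheses (he : og_lt O 0 e) (hyK : outside_K y).
Hypothesis hfar : forall r : K, valG (y - iota r) <=[O] valG y + e.

(* m stands for min (v y) (v a). *)
Lemma linear_factor_bound (a : K) : exists m : G,
  [/\ m <=[O] valG y, val_ge (iota a) m & valG (y - iota a) <=[O] m + e].
Proof.
case: (classic (val_ge (iota a) (valG y))) => hay.
  by exists (valG y); split=> //; apply: og_refl.
have ha : iota a != 0 by apply: contra_notN hay => /eqP ->; apply: (val_ge_zero hv).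
have hlt : og_lt O (valG (iota a)) (valG y).
  split; last by move=> E; apply: hay; rewrite -E; apply: (val_ge_valG hv).
  by case: (og_total O (valG y) (valG (iota a))) => // h; case: hay; rewrite (val_geE hv).
exists (valG (iota a)); split; [exact: hlt.1 | exact: (val_ge_valG hv)|].
rewrite -(valGN hv) in hlt; rewrite -oppr_eq0 in ha.
rewrite [y - _]addrC; have [_ ->] := valGD_lt hv ha (val_ge_valG hv y) hlt.
by rewrite (valGN hv); apply: og_le_addr he.1.
Qed.

Lemma prod_linear_bound (c0 : L) (s : seq K) : c0 != 0 ->
  let P := c0 *: \prod_(r <- s) ('X - (iota r)%:P) in
  exists lam : G, [/\ forall j, val_ge P`_j (lam - valG y *+ j),
    P.[y] != 0 & valG P.[y] <=[O] lam + e *+ size s].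
Proof.
move=> hc; elim: s => [|a s [lam [Hcoef Hnz Hval]]] /=.
  exists (valG c0); rewrite big_nil alg_polyC hornerC; split=> //.
    move=> [|j]; last by rewrite coefC; apply: (val_ge_zero hv).
    by rewrite coefC subr0; apply: (val_ge_valG hv).
  by rewrite addr0; apply: og_refl.
have [m [my ma hya]] := linear_factor_bound a.
set P := c0 *: _ in Hcoef Hnz Hval.
rewrite big_cons scalerAr -/P; exists (lam + m); split.
- move=> j; rewrite mulrBl coefB coefXM coefCM; apply: (val_geB hv).
    case: j => [|j] /=; first exact: (val_ge_zero hv).
    apply: (val_ge_le hv _ (Hcoef j)).
    rewrite mulrSr opprD addrACA -[X in _ <=[O] X]addr0; apply: og_addl.
    by rewrite -(subrr (valG y)); apply: og_addr.
  by rewrite addrAC addrC; apply: (val_geM hv).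
- by rewrite hornerM hornerXsubC mulf_neq0 // outside_K_subr.
- rewrite hornerM hornerXsubC (valGM hv) ?outside_K_subr // mulrSr addrACA addrC.
  exact: og_leD.
Qed.

End NonImprovable.

Section ImprovableElement.
Variables (e : G) (t : L).
Hypotheses (htK : outside_K t) (hte : improvable t e).

Lemma improvable_approx (S : seq K) (k : nat) : exists b : K,
  forall s, s \in S -> valG (t - iota s) + e *+ k <=[O] valG (t - iota b).
Proof.
elim: k => [|k [b IH]].
  elim: S => [|a S [b IH]]; first by exists 0.
  case: (og_total O (valG (t - iota a)) (valG (t - iota b))) => h.
    by exists b => s; rewrite inE => /orP [/eqP ->|/IH]; rewrite addr0.
  exists a => s; rewrite inE addr0 => /orP [/eqP ->|/IH]; first exact: og_refl.
  by rewrite addr0 => hs; apply: og_trans hs h.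
have [b' hb'] := hte b; rewrite (val_geE hv) ?outside_K_subr // in hb'.
exists b' => s /IH hs; rewrite mulrSr addrA; exact: og_trans (og_addr e hs) hb'.
Qed.

Lemma prod_sub_approx (S : seq K) (b : K) (m : G) : 0 <=[O] m ->
  (forall s, s \in S -> valG (t - iota s) + m <=[O] valG (t - iota b)) ->
  val_ge (\prod_(s <- S) (t - iota s) - \prod_(s <- S) (iota b - iota s))
         (\sum_(s <- S) valG (t - iota s) + m).
Proof.
move=> hm; elim: S => [|a S IH] hS; first by rewrite !big_nil subrr; apply: (val_ge_zero hv).
have ha : valG (t - iota a) + m <=[O] valG (t - iota b) by apply: hS; rewrite mem_head.
rewrite !big_cons; set X := \prod_(s <- S) _; set Y := \prod_(s <- S) _.
have -> : (t - iota a) * X - (iota b - iota a) * Y =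
    (t - iota a) * (X - Y) + (t - iota b) * Y by ring.
apply: (val_geD hv).
  rewrite -addrA; apply: (val_geM hv (val_ge_valG hv _)).
  by apply: IH => s hs; apply: hS; rewrite inE hs orbT.
rewrite addrAC; apply: (val_geM hv); first by rewrite (val_geE hv) ?outside_K_subr.
apply: (val_ge_prod hv) => s hs.
have -> : iota b - iota s = (t - iota s) - (t - iota b) by ring.
apply: (val_geB hv (val_ge_valG hv _)).
rewrite (val_geE hv) ?outside_K_subr //; apply: og_trans (hS s _); last by rewrite inE hs orbT.
exact: og_le_addr.
Qed.

End ImprovableElement.

End Approximation.

Section ClosedApproximation.
Variables (K : closedFieldType) (L : fieldType) (iota : {rmorphism K -> L}).
Variables (G : zmodType) (O : ordered_abgroup G) (v : L -> option G).
Hypothesis hv : is_valuation O v.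
Local Notation valG := (valG v).
Local Notation val_ge := (val_ge O v).

Local Notation outside_K := (outside_K iota).
Local Notation improvable := (improvable iota O v).
Local Notation hornerK := (hornerK iota).

Definition root_seq (q : {poly K}) : seq K := sval (closed_field_poly_normal q).

Lemma map_poly_root_seq (q : {poly K}) :
  map_poly iota q = iota (lead_coef q) *: \prod_(r <- root_seq q) ('X - (iota r)%:P).
Proof.
rewrite {1}(svalP (closed_field_poly_normal q)) map_polyZ rmorph_prod /=.
by congr (_ *: _); apply: eq_bigr => r _; rewrite map_polyXsubC.
Qed.

Lemma size_root_seq (q : {poly K}) : q != 0 -> size q = (size (root_seq q)).+1.
Proof.
move=> nz; rewrite {1}(svalP (closed_field_poly_normal q)) size_scale.
  by rewrite size_prod_XsubC.
by rewrite lead_coef_eq0.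
Qed.

Lemma hornerK_root_seq (q : {poly K}) (z : L) :
  hornerK z q = iota (lead_coef q) * \prod_(r <- root_seq q) (z - iota r).
Proof.
rewrite /hornerK map_poly_root_seq hornerZ horner_prod.
by congr (_ * _); apply: eq_bigr => r _; rewrite hornerXsubC.
Qed.

Section NonImprovable.
Variables (e : G) (y : L).
Hypotheses (he : og_lt O 0 e) (hyK : outside_K y).
Hypothesis hfar : forall r : K, valG (y - iota r) <=[O] valG y + e.

Lemma horner_valG_bound (h : {poly K}) : h != 0 -> exists lam : G,
  [/\ forall j, val_ge (iota h`_j) (lam - valG y *+ j),
    hornerK y h != 0 & valG (hornerK y h) <=[O] lam + e *+ (size h).-1].
Proof.
move=> hh; have hl : iota (lead_coef h) != 0 by rewrite fmorph_eq0 lead_coef_eq0.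
have [lam [Hcoef Hnz Hval]] := prod_linear_bound hv he hyK hfar (root_seq h) hl.
rewrite -map_poly_root_seq in Hcoef Hnz Hval.
exists lam; split=> //; first by move=> j; rewrite -coef_map.
by rewrite size_root_seq.
Qed.

Lemma no_small_perturbation (h : {poly K}) (c : {poly L}) (N : nat) :
  h != 0 -> (size h <= N)%N -> (size c <= N)%N -> c.[y] = 0 ->
  (forall j, h`_j = 0 -> c`_j = 0) ->
  (forall j, h`_j != 0 -> val_ge (iota h`_j - c`_j) (valG (iota h`_j) + e *+ N)) ->
  False.
Proof.
move=> hh hhN hcN hcy hc0 hclose.
have [lam [Hcoef Hnz Hval]] := horner_valG_bound hh.
have hy0 : y != 0 by have := hyK 0; rewrite rmorph0.
have Ehy : hornerK y h = \sum_(j < N) (iota h`_j - c`_j) * y ^+ j.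
  rewrite (eq_bigr (fun j : 'I_N => iota h`_j * y ^+ j - c`_j * y ^+ j)) => [|j _].
    rewrite sumrB -(horner_coef_wide _ hcN) hcy subr0 /hornerK.
    rewrite (horner_coef_wide _ (leq_trans (size_map_poly_le _ _) hhN)).
    by apply: eq_bigr => j _; rewrite coef_map.
  by rewrite mulrBl.
have : val_ge (hornerK y h) (lam + e *+ N).
  rewrite Ehy; apply: (val_ge_sum hv) => j _.
  have [h0|hj] := eqVneq h`_j 0.
    by rewrite h0 hc0 // rmorph0 subr0 mul0r; apply: (val_ge_zero hv).
  have hyj : val_ge (y ^+ j) (valG y *+ j) by rewrite -(valGX hv) //; apply: (val_ge_valG hv).
  apply: (val_ge_le hv _ (val_geM hv (hclose j hj) hyj)).
  rewrite -[lam](subrK (valG y *+ j)) addrAC; apply/og_addr/og_addr.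
  by move: (Hcoef j); rewrite (val_geE hv) // fmorph_eq0.
rewrite (val_geE hv) // => hlow.
have hsz : ((size h).-1 < N)%N by rewrite prednK ?size_poly_gt0.
apply: (og_mulrn_lt he hsz).
by have := og_addl (- lam) (og_trans hlow Hval); rewrite !addKr.
Qed.

End NonImprovable.

Section ImprovableElement.
Variables (e : G) (t : L).
Hypotheses (he : og_lt O 0 e) (htK : outside_K t) (hte : improvable t e).

Lemma horner_approx (q : {poly K}) (b : K) (m : G) : q != 0 -> 0 <=[O] m ->
  (forall s, s \in root_seq q -> valG (t - iota s) + m <=[O] valG (t - iota b)) ->
  hornerK t q != 0 /\ val_ge (hornerK t q - iota q.[b]) (valG (hornerK t q) + m).
Proof.
move=> hq hm hS; have hl : iota (lead_coef q) != 0 by rewrite fmorph_eq0 lead_coef_eq0.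
have [hP vP] := valG_prod hv (root_seq q) (fun r => outside_K_subr r htK).
have -> : iota q.[b] = hornerK (iota b) q by rewrite /hornerK horner_map.
rewrite !hornerK_root_seq mulf_neq0 //; split=> //.
rewrite -mulrBr (valGM hv) // vP -addrA.
exact: (val_geM hv (val_ge_valG hv _) (prod_sub_approx hv htK hm hS)).
Qed.

Lemma good_specialization (qs : seq {poly K}) (M : nat) : (0 < M)%N ->
  exists b : K, forall q, q \in qs -> q != 0 ->
    iota q.[b] != 0 /\ val_ge (iota q.[b] - hornerK t q) (valG (iota q.[b]) + e *+ M).
Proof.
move=> hM; have heM := og_mulrn_gt0 he hM.
have [b hb] := improvable_approx hv htK hte (flatten (map root_seq qs)) M.
exists b => q hq nq.
have hS s : s \in root_seq q -> valG (t - iota s) + e *+ M <=[O] valG (t - iota b).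
  by move=> hs; apply: hb; apply/flattenP; exists (root_seq q) => //; apply: map_f.
have [hqt hclose] := horner_approx nq heM.1 hS.
have [hqb ->] := valG_close hv hqt hclose heM.
by split=> //; rewrite -opprB; apply: (val_geN hv).
Qed.

Lemma approx0_improvable (y : L) (Q : {poly {poly K}}) : outside_K y -> Q != 0 ->
  (map_poly (hornerK t) Q).[y] = 0 -> exists r : K, val_ge (y - iota r) (valG y + e).
Proof.
move=> hyK hQ hrel; apply: NNPP => hno.
have hfar r : valG (y - iota r) <=[O] valG y + e.
  case: (og_total O (valG y + e) (valG (y - iota r))) => // h.
  by case: hno; exists r; rewrite (val_geE hv) ?outside_K_subr.
have hN : (0 < size Q)%N by rewrite size_poly_gt0.
have [b hb] := good_specialization Q hN.
have hbQ j : Q`_j != 0 -> iota (Q`_j).[b] != 0 /\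
    val_ge (iota (Q`_j).[b] - hornerK t Q`_j) (valG (iota (Q`_j).[b]) + e *+ size Q).
  move=> hj; apply: (hb _ _ hj); apply: mem_nth.
  by rewrite ltnNge; apply: contraNN hj => /(nth_default 0) ->.
have coefh j : (map_poly (horner^~ b) Q)`_j = (Q`_j).[b] by rewrite coef_map_id0 ?horner0.
have coefc j : (map_poly (hornerK t) Q)`_j = hornerK t Q`_j.
  by rewrite coef_map_id0 // /hornerK map_poly0 horner0.
apply: (no_small_perturbation he hyK hfar (h := map_poly (horner^~ b) Q) _
  (size_map_poly_le _ _) (size_map_poly_le _ _) hrel).
- apply/eqP => h0; have := (hbQ (size Q).-1); rewrite -lead_coefE lead_coef_eq0.
  by case=> // + _; rewrite lead_coefE -coefh h0 coef0 rmorph0 eqxx.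
- move=> j; rewrite coefh coefc; have [->|hj] := eqVneq Q`_j 0.
    by rewrite /hornerK map_poly0 horner0.
  by move=> h0; case: (hbQ j hj); rewrite h0 rmorph0 eqxx.
- move=> j; rewrite coefh coefc; have [->|hj] := eqVneq Q`_j 0; first by rewrite horner0 eqxx.
  by move=> _; case: (hbQ j hj).
Qed.

Lemma improvable_algebraic (x : L) (P : {poly {poly K}}) : outside_K x -> P != 0 ->
  (map_poly (hornerK t) P).[x] = 0 -> improvable x e.
Proof.
move=> hx hP hrel b0.
set Q := P \Po ('X + (b0%:P)%:P).
have hQ : Q != 0 by rewrite comp_poly2_eq0 // size_XaddC.
have cfu : commr_rmorph iota t by move=> a; rewrite /GRing.comm mulrC.
have Em : map_poly (hornerK t) =1 map_poly (horner_morph cfu) by apply: eq_map_poly.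
have hrelQ : (map_poly (hornerK t) Q).[x - iota b0] = 0.
  rewrite Em map_comp_poly horner_comp rmorphD /= map_polyX map_polyC /=.
  by rewrite hornerD hornerX hornerC horner_morphC subrK -Em.
have [r hr] := approx0_improvable (outside_K_shift b0 hx) hQ hrelQ.
by exists (b0 + r); rewrite rmorphD opprD addrA.
Qed.

End ImprovableElement.

End ClosedApproximation.

Section ValueSets.
Variables (K : fieldType) (L : fieldType) (iota : {rmorphism K -> L}).
Variables (G : zmodType) (O : ordered_abgroup G) (v : L -> option G).
Hypothesis hv : is_valuation O v.
Local Notation valG := (valG v).
Local Notation val_ge := (val_ge O v).
Local Notation outside_K := (outside_K iota).
Local Notation improvable := (improvable iota O v).
Local Notation Tset := (Tset iota v).
Local Notation Eset := (Eset iota v).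

Lemma Eset_improvable x e : outside_K x -> Eset x e -> improvable x e.
Proof.
move=> hx [_ hT] b.
have [|b' hb'] := (hT (oadd (Some e) (v (x - iota b)))).2.
  by exists (v (x - iota b)); split=> //; exists b.
exists b'; rewrite /val_ge -hb' (v_Some hv (outside_K_subr b hx)) /= addrC.
exact: og_refl.
Qed.

Lemma improvable_val_in_valK x e : outside_K x -> og_lt O 0 e -> improvable x e ->
  forall b : K, exists w : K, w != 0 /\ valG (iota w) = valG (x - iota b).
Proof.
move=> hx he hA b; have [b' hb'] := hA b; exists (b' - b).
have hclose : val_ge (x - iota b - iota (b' - b)) (valG (x - iota b) + e).
  by have -> : x - iota b - iota (b' - b) = x - iota b' by rewrite rmorphB; ring.
have [nz ->] := valG_close hv (outside_K_subr b hx) hclose he.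
by rewrite fmorph_eq0 in nz.
Qed.

Lemma Tset_valK_lt x b c : outside_K x -> c != 0 ->
  og_lt O (valG (iota c)) (valG (x - iota b)) -> Tset x (Some (valG (iota c))).
Proof.
move=> hx hc hlt; exists (b - c); rewrite -(fmorph_eq0 iota) in hc.
have [nz E] := valGD_lt hv hc (val_ge_valG hv (x - iota b)) hlt.
by rewrite rmorphB opprB addrCA -E (v_Some hv nz).
Qed.

Lemma improvable_Eset x e : outside_K x -> og_lt O 0 e ->
  (exists a : K, a != 0 /\ v (iota a) = Some e) -> improvable x e -> Eset x e.
Proof.
move=> hx he [a [ha hva]] hA; split; first by exists a.
have vae : valG (iota a) = e by rewrite /valG hva.
have hia : iota a != 0 by rewrite fmorph_eq0.
move=> g; split=> [[b ->]|[h [[b ->] ->]]]; rewrite (v_Some hv (outside_K_subr b hx)).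
  have [w [hw vw]] := improvable_val_in_valK hx he hA b.
  have hiw : iota w != 0 by rewrite fmorph_eq0.
  have vwa : valG (iota (w / a)) = valG (x - iota b) - e.
    by rewrite rmorphM fmorphV (valGM hv hiw (invr_neq0 hia)) (valGV hv hia) vw vae.
  exists (Some (valG (x - iota b) - e)); split; last by rewrite /= addrCA subrr addr0.
  rewrite -vwa; apply: (Tset_valK_lt (b := b) hx (mulf_neq0 hw (invr_neq0 ha))).
  by rewrite vwa -{2}(subrK e (valG (x - iota b))); apply: og_lt_addr.
have [b1 hb1] := hA b; have hb1K := outside_K_subr b1 hx.
rewrite (val_geE hv _ hb1K) in hb1.
have [E|ne] := eqVneq (valG (x - iota b1)) (valG (x - iota b) + e).
  by exists b1; rewrite (v_Some hv hb1K) E /= addrC.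
have [w [hw vw]] := improvable_val_in_valK hx he hA b.
have hiw : iota w != 0 by rewrite fmorph_eq0.
have vwa : valG (iota (w * a)) = valG (x - iota b) + e.
  by rewrite rmorphM (valGM hv hiw hia) vw vae.
rewrite /= addrC -vwa; apply: (Tset_valK_lt (b := b1) hx (mulf_neq0 hw ha)).
by rewrite vwa; split=> // /esym /eqP; apply/negP.
Qed.

Lemma EsetN x e : Eset x e -> Eset x (- e).
Proof.
move=> [[a [ha hva]] hT]; split.
  exists a^-1; rewrite invr_eq0 fmorphV; split=> //.
  by rewrite (v_Some hv) ?invr_eq0 ?fmorph_eq0 // (valGV hv) ?fmorph_eq0 // /valG hva.
move=> g; split=> [hg|[h [/hT [h' [hh' ->]] ->]]].
  exists (oadd (Some e) g); split; first by apply/hT; exists g.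
  by case: g {hg}=> //= g; rewrite addKr.
by case: h' hh' => //= h' hh'; rewrite addKr.
Qed.

Lemma Eset0 x : Eset x 0.
Proof.
split; first by exists 1; rewrite oner_neq0 rmorph1 (v_Some hv) ?oner_neq0 // (valG1 hv).
move=> g; split=> [hg|[h [hh ->]]].
  by exists g; split=> //; case: g {hg} => //= g; rewrite add0r.
by case: h hh => //= h; rewrite add0r.
Qed.

End ValueSets.

Section Transfer.
Variables (K : closedFieldType) (L : fieldType) (iota : {rmorphism K -> L}).
Variables (G : zmodType) (O : ordered_abgroup G) (v : L -> option G).
Hypothesis hv : is_valuation O v.
Local Notation outside_K := (outside_K iota).
Local Notation Eset := (Eset iota v).

Lemma Eset_transfer_pos c d e : outside_K c -> outside_K d -> trdeg1 iota ->
  og_lt O 0 e -> Eset c e -> Eset d e.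
Proof.
move=> hc hd [t [htr halg]] he hEc.
have htK := transcendental_outside_K htr.
have [P [hP hcP]] := halg c; have [Q [hQ hdQ]] := halg d.
have hct : (map_poly (hornerK iota c) (swapXY P)).[t] = 0 by rewrite hornerK_swapXY.
have hAc := Eset_improvable hv hc hEc.
have hP' : swapXY P != 0 by rewrite swapXY_eq0.
have hAt := improvable_algebraic hv he hc hAc htK hP' hct.
have hAd := improvable_algebraic hv he htK hAt hd hQ hdQ.
exact: (improvable_Eset hv hd he hEc.1 hAd).
Qed.

Lemma Eset_transfer c d e : outside_K c -> outside_K d -> trdeg1 iota ->
  Eset c e -> Eset d e.
Proof.
move=> hc hd htr; have [->|ne] := eqVneq e 0; first by move=> _; exact: (Eset0 iota hv).
case: (og_total O 0 e) => he.
  move=> hEc; apply: (Eset_transfer_pos hc hd htr _ hEc).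
  by split=> //; apply/eqP; rewrite eq_sym.
have hNe : og_lt O 0 (- e).
  split; last by apply/eqP; rewrite eq_sym oppr_eq0.
  by have := og_addl (- e) he; rewrite addNr addr0.
by move/(EsetN hv)/(Eset_transfer_pos hc hd htr hNe)/(EsetN hv); rewrite opprK.
Qed.

End Transfer.

Theorem lemma7p11 (K : closedFieldType) (L : fieldType) (iota : {rmorphism K -> L})
    (G : zmodType) (O : ordered_abgroup G) (v : L -> option G)
    (hv : is_valuation O v) (htr : trdeg1 iota)
    (c d : L) (hc : forall b : K, c != iota b) (hd : forall b : K, d != iota b) :
  forall e : G, Eset iota v c e <-> Eset iota v d e.
Proof. by move=> e; split; apply: (Eset_transfer hv). Qed.
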